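(* For every finite set $\Omega$ with $|\Omega|\ge2$, every $\varepsilon>0$ and all integers $k,l\ge1$ there exist $\delta>0$ and $n_0>0$ such that for all $n>n_0$ and all $\mu,\nu\in\mathcal P(\Omega^n)$ with $D_\square(\mu,\nu)<\delta$, every $(k,l)$-intensive observable $f$ satisfies $\big|\langle f(\sigma^{(1)},\dots,\sigma^{(k)})\rangle_\mu-\langle f(\sigma^{(1)},\dots,\sigma^{(k)})\rangle_\nu\big|<\varepsilon$.
   Context: $\mathcal P(\mathcal X)$ denotes the set of probability measures on a finite set $\mathcal X$; $[n]=\{1,\dots,n\}$. A function $f:(\Omega^n)^k\to[0,1]$ is a $(k,l)$-intensive observable if there exist $I_1,\dots,I_l\subset[n]$ and $\tau^{(j)}_1,\dots,\tau^{(j)}_l\in\Omega$ for $j=1,\dots,k$ such that $f(\sigma^{(1)},\dots,\sigma^{(k)})=\frac1{n^l}\sum_{i_1\in I_1,\dots,i_l\in I_l}\prod_{j=1}^k\mathbf 1\{\sigma^{(j)}_{i_1}=\tau^{(j)}_1,\dots,\sigma^{(j)}_{i_l}=\tau^{(j)}_l\}$. For $\mu\in\mathcal P(\Omega^n)$, $\langle f(\sigma^{(1)},\dots,\sigma^{(k)})\rangle_\mu=\sum_{\sigma^{(1)},\dots,\sigma^{(k)}}f(\sigma^{(1)},\dots,\sigma^{(k)})\prod_{j=1}^k\mu(\sigma^{(j)})$ is the expectation over $k$ independent samples from $\mu$. For $\mu,\nu\in\mathcal P(\Omega^n)$ let $\Gamma(\mu,\nu)$ be the set of couplings, i.e. probability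 measures $\gamma$ on $\Omega^n\times\Omega^n$ whose first and second marginals are $\mu$ and $\nu$. The cut metric is $D_\square(\mu,\nu)=\frac1n\min_{\gamma\in\Gamma(\mu,\nu)}\max_{I\subset[n],\,B\subset\Omega^n\times\Omega^n,\,\omega\in\Omega}\Big|\sum_{i\in I}\sum_{(\sigma,\tau)\in B}\gamma(\sigma,\tau)\big(\mathbf 1\{\sigma_i=\omega\}-\mathbf 1\{\tau_i=\omega\}\big)\Big|$. *)

(* Reals are modelled by an arbitrary Archimedean real closed
   field R (e.g. the real algebraic numbers; every such field embeds in the reals). *)
From HB Require Import structures.
From mathcomp Require Import all_boot all_order all_algebra.
Set Implicit Arguments. Unset Strict Implicit. Unset Printing Implicit Defensive.
Import Order.TTheory GRing.Theory Num.Theory.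
Local Open Scope ring_scope.

Definition config (Omega : finType) (n : nat) := {ffun 'I_n -> Omega}.

Definition is_prob (R : numDomainType) (X : finType) (mu : {ffun X -> R}) : Prop :=
  (forall x, 0 <= mu x) /\ \sum_(x : X) mu x = 1.

(* The (k,l)-intensive observable with index sets I_1..I_l (I m = I_{m+1})
   and spins tau^{(j)}_m (tau j m):
   f(sigma^(1..k)) = n^{-l} sum_{i_1 in I_1,...,i_l in I_l}
                      prod_j 1{sigma^(j)_{i_1}=tau^(j)_1,...,sigma^(j)_{i_l}=tau^(j)_l}. *)
Definition intensive_obs (R : numFieldType) (Omega : finType) (n k l : nat)
    (I : 'I_l -> {set 'I_n}) (tau : 'I_k -> 'I_l -> Omega)
    (sigma : 'I_k -> config Omega n) : R :=
  (n%:R ^+ l)^-1 *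
  \sum_(i : {ffun 'I_l -> 'I_n} | [forall m, i m \in I m])
     \prod_(j < k) ([forall m, sigma j (i m) == tau j m] : bool)%:R.

Definition expect (R : numFieldType) (Omega : finType) (n k : nat)
    (mu : {ffun config Omega n -> R}) (f : ('I_k -> config Omega n) -> R) : R :=
  \sum_(s : {ffun 'I_k -> config Omega n}) f s * \prod_(j < k) mu (s j).

Definition is_coupling (R : numDomainType) (X : finType)
    (mu nu : {ffun X -> R}) (gamma : {ffun (X * X)%type -> R}) : Prop :=
  (forall p, 0 <= gamma p) /\
  (forall x, \sum_(y : X) gamma (x, y) = mu x) /\
  (forall y, \sum_(x : X) gamma (x, y) = nu y).

(* max_{I subset [n], B subset Omega^n x Omega^n, omega in Omega} |...|
   (all terms are >= 0, so the max with neutral element 0 is the max). *)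
Definition cut_value (R : realDomainType) (Omega : finType) (n : nat)
    (gamma : {ffun (config Omega n * config Omega n)%type -> R}) : R :=
  \big[Num.max/0]_(I : {set 'I_n})
   \big[Num.max/0]_(B : {set (config Omega n * config Omega n)%type})
    \big[Num.max/0]_(omega : Omega)
      `| \sum_(i in I) \sum_(p in B)
           gamma p * ((p.1 i == omega)%:R - (p.2 i == omega)%:R) |.

(* D_cut(mu,nu) < delta.  D_cut is (1/n) min over couplings of cut_value;
   the min is attained (finite LP), so D_cut < delta iff some coupling has
   (1/n) * cut_value < delta.  *)
Definition Dcut_lt (R : realFieldType) (Omega : finType) (n : nat)
    (mu nu : {ffun config Omega n -> R}) (delta : R) : Prop :=
  exists gamma, is_coupling mu nu gamma /\ (n%:R)^-1 * cut_value gamma < delta.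

From HB Require Import structures.
From mathcomp Require Import all_boot all_order all_algebra.
From mathcomp Require Import ring lra.
Import Order.TTheory GRing.Theory Num.Theory.
Local Open Scope ring_scope.

(* Telescoping the product of the k replica weights, the difference of the two
   expectations is a sum of k terms in which only replica t is weighted by
   mu - nu.  Once the other replicas are frozen, a (k,l)-intensive observable is
   a product over m < l of the fractions of sites of a set J_m carrying a given
   spin; telescoping this product again and lifting mu, nu to a coupling gamma,
   each of the l resulting terms is a gamma-integral of
   sum_{i in J_m} (1{sigma_i = omega} - 1{sigma'_i = omega}) against a weight in
   [0, 1], hence at most the cut value of gamma.  So the difference is at most
   k l D_cut(mu, nu), and delta = eps / (k l) works for every n. *)

Lemma ler_norm_sum_weighted (R : realDomainType) (T : finType) (g w : T -> R)
    (C : R) :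
  (forall p, 0 <= w p <= 1) ->
  (forall B : {set T}, `|\sum_(p in B) g p| <= C) ->
  `|\sum_p g p * w p| <= C.
Proof.
move=> w01 gB; rewrite ler_norml; apply/andP; split.
- have := gB [set p | g p < 0]; rewrite ler_norml => /andP[lower _].
  apply: le_trans lower _; rewrite big_mkcond /=; apply: ler_sum => p _; rewrite inE.
  by have := w01 p; case: ifP => gp; nra.
- have := gB [set p | 0 < g p]; rewrite ler_norml => /andP[_ upper].
  apply: le_trans upper.
  rewrite [X in _ <= X]big_mkcond /=; apply: ler_sum => p _; rewrite inE.
  by have := w01 p; case: ifP => gp; nra.
Qed.

Lemma prodrB_telescope (R : comPzRingType) (N : nat) (a b : 'I_N -> R) :
  \prod_j a j - \prod_j b j =
  \sum_(t < N) (a t - b t) * \prod_(j | j != t) (if (j < t)%N then b j else a j).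
Proof.
pose P q := \prod_(j < N) (if (j < q)%N then b j else a j).
have P0 : P 0%N = \prod_j a j by apply: eq_bigr.
have PN : P N = \prod_j b j by apply: eq_bigr => j _; rewrite ltn_ord.
rewrite -P0 -PN -opprB -(telescope_sumr _ (leq0n N)) -sumrN big_mkord.
apply: eq_bigr => t _; rewrite opprB /P (bigD1 t) //= ltnn.
rewrite [X in _ - X](bigD1 t) //= ltnSn mulrBl; congr (_ - _ * _).
apply: eq_bigr => j jt; rewrite ltnS leq_eqVlt.
by have -> : (nat_of_ord j == t) = false by apply/negbTE.
Qed.

Lemma natr_prod_bool (R : comPzSemiRingType) (T : finType) (P : pred T) :
  \prod_j ((P j)%:R : R) = ([forall j, P j])%:R.
Proof.
case: forallP => [PT | /forallP]; first by rewrite big1 // => j _; rewrite PT.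
rewrite negb_forall => /existsP[j0 Pj0].
by rewrite (bigD1 j0) //= (negbTE Pj0) mul0r.
Qed.

Lemma cut_value_ge (R : realDomainType) (Omega : finType) (n : nat)
    (gamma : {ffun (config Omega n * config Omega n)%type -> R})
    (J : {set 'I_n}) (om : Omega) (w : config Omega n * config Omega n -> R) :
  (forall p, 0 <= w p <= 1) ->
  `|\sum_p gamma p * (\sum_(i in J) ((p.1 i == om)%:R - (p.2 i == om)%:R)) * w p|
    <= cut_value gamma.
Proof.
move=> w01; apply: ler_norm_sum_weighted => // B.
rewrite /cut_value; apply: le_trans (le_bigmax _ _ J); apply: le_trans (le_bigmax _ _ B).
apply: le_trans (le_bigmax _ _ om).
by rewrite exchange_big; under [X in _ <= `|X|]eq_bigr do rewrite -mulr_sumr.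
Qed.

Definition cut_dist (R : realFieldType) (Omega : finType) (n : nat)
    (gamma : {ffun (config Omega n * config Omega n)%type -> R}) : R :=
  n%:R^-1 * cut_value gamma.
Arguments cut_dist {R Omega n}.

Definition spin_density (R : numFieldType) (Omega : finType) (n : nat)
    (J : {set 'I_n}) (om : Omega) (s : config Omega n) : R :=
  n%:R^-1 * \sum_(i in J) ((s i == om)%:R : R).
Arguments spin_density {R Omega n}.

Lemma spin_density_itv (R : numFieldType) (Omega : finType) (n : nat)
    (J : {set 'I_n}) (om : Omega) (s : config Omega n) :
  0 <= (spin_density J om s : R) <= 1.
Proof.
have n_ge0 : 0 <= n%:R^-1 :> R by rewrite invr_ge0 ler0n.
rewrite mulr_ge0 ?sumr_ge0 //=.
have sum_le_n : \sum_(i in J) ((s i == om)%:R : R) <= n%:R.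
  apply: le_trans (_ : \sum_(i < n) 1 <= _); last by rewrite sumr_const card_ord.
  by rewrite big_mkcond /=; apply: ler_sum => i _; case: ifP; case: (s i == om).
apply: le_trans (ler_wpM2l n_ge0 sum_le_n) _.
by case: n {J s n_ge0 sum_le_n} => [|n]; rewrite ?invr0 ?mul0r // mulVf ?pnatr_eq0.
Qed.

Section Coupling.

Variables (R : realFieldType) (Omega : finType) (n : nat).
Variables (mu nu : {ffun config Omega n -> R}).
Variable gamma : {ffun (config Omega n * config Omega n)%type -> R}.
Hypothesis gamma_coupling : is_coupling mu nu gamma.

Lemma coupling_sum_l (G : config Omega n -> R) :
  \sum_s mu s * G s = \sum_p gamma p * G p.1.
Proof.
case: gamma_coupling => _ [gamma_mu _].
under eq_bigr do rewrite -gamma_mu mulr_suml.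
by rewrite pair_big /=; apply: eq_bigr => -[].
Qed.

Lemma coupling_sum_r (G : config Omega n -> R) :
  \sum_s nu s * G s = \sum_p gamma p * G p.2.
Proof.
case: gamma_coupling => _ [_ gamma_nu].
under eq_bigr do rewrite -gamma_nu mulr_suml.
by rewrite exchange_big pair_big /=; apply: eq_bigr => -[].
Qed.

Lemma ler_coupling_spin_density (J : {set 'I_n}) (om : Omega)
    (w : config Omega n * config Omega n -> R) :
  (forall p, 0 <= w p <= 1) ->
  `|\sum_p gamma p * (spin_density J om p.1 - spin_density J om p.2) * w p|
    <= cut_dist gamma.
Proof.
move=> w01; have n_ge0 : 0 <= n%:R^-1 :> R by rewrite invr_ge0 ler0n.
have -> : \sum_p gamma p * (spin_density J om p.1 - spin_density J om p.2) * w p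
    = n%:R^-1 * \sum_p gamma p *
        (\sum_(i in J) ((p.1 i == om)%:R - (p.2 i == om)%:R)) * w p.
  by rewrite mulr_sumr; apply: eq_bigr => p _; rewrite -mulrBr -sumrB; ring.
by rewrite normrM ger0_norm // ler_wpM2l // cut_value_ge.
Qed.

Lemma ler_prod_spin_density (l : nat) (J : 'I_l -> {set 'I_n})
    (om : 'I_l -> Omega) :
  `|\sum_s mu s * \prod_m spin_density (J m) (om m) s
    - \sum_s nu s * \prod_m spin_density (J m) (om m) s| <= l%:R * cut_dist gamma.
Proof.
pose d m s : R := spin_density (J m) (om m) s.
rewrite (coupling_sum_l (fun s => \prod_m d m s)).
rewrite (coupling_sum_r (fun s => \prod_m d m s)) -sumrB.
pose W (m : 'I_l) (p : config Omega n * config Omega n) :=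
  \prod_(j | j != m) (if (j < m)%N then d j p.2 else d j p.1).
have -> : \sum_p (gamma p * \prod_m d m p.1 - gamma p * \prod_m d m p.2) =
    \sum_m \sum_p gamma p * (d m p.1 - d m p.2) * W m p.
  rewrite exchange_big; apply: eq_bigr => p _.
  by rewrite -mulrBr prodrB_telescope mulr_sumr; apply: eq_bigr => m _; rewrite mulrA.
rewrite mulr_natl -[X in _ *+ X]card_ord -sumr_const.
apply: le_trans (ler_norm_sum _ _ _) (ler_sum _ _) => m _.
apply: ler_coupling_spin_density => p.
have W01 (j : 'I_l) : 0 <= (if (j < m)%N then d j p.2 else d j p.1) <= 1.
  by case: ifP => _; apply: spin_density_itv.
by rewrite prodr_ge0 ?prodr_ile1 // => j _; case/andP: (W01 j).
Qed.

End Coupling.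

Definition ffun_set (k : nat) (X : finType) (y : {ffun 'I_k -> X}) (t : 'I_k)
    (x : X) : {ffun 'I_k -> X} :=
  [ffun j => if j == t then x else y j].
Arguments ffun_set {k X}.

Lemma ffun_set_set {k : nat} {X : finType} (y : {ffun 'I_k -> X}) t x x' :
  ffun_set (ffun_set y t x) t x' = ffun_set y t x'.
Proof. by apply/ffunP => j; rewrite !ffunE; case: (j == t). Qed.

Lemma ffun_set_id {k : nat} {X : finType} (y : {ffun 'I_k -> X}) t :
  ffun_set y t (y t) = y.
Proof. by apply/ffunP => j; rewrite ffunE; case: eqP => // ->. Qed.

Lemma sum_ffun_set {R : nmodType} {k : nat} {X : finType} (t : 'I_k) (x0 : X)
    (H : {ffun 'I_k -> X} -> R) :
  \sum_s H s = \sum_(y : {ffun 'I_k -> X} | y t == x0) \sum_x H (ffun_set y t x).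
Proof.
rewrite pair_big_dep /= (reindex_onto (fun p => ffun_set p.1 t p.2)
  (fun s => (ffun_set s t x0, s t)) (P := xpredT)) /=; last first.
  by move=> s _; rewrite ffun_set_set ffun_set_id.
apply: eq_bigl => -[y x] /=.
rewrite ffun_set_set ffunE eqxx xpair_eqE eqxx !andbT.
apply/eqP/eqP => [<- | y_t]; first by rewrite ffunE eqxx.
by rewrite -[in RHS](ffun_set_id y t) y_t.
Qed.

Lemma sum_prod_except1 {R : comPzSemiRingType} {k : nat} {X : finType} (t : 'I_k)
    (x0 : X) (c : 'I_k -> X -> R) :
  (forall j, \sum_x c j x = 1) ->
  \sum_(y : {ffun 'I_k -> X} | y t == x0) \prod_(j | j != t) c j (y j) = 1.
Proof.
move=> c1; pose c' j x := if j == t then ((x == x0)%:R : R) else c j x.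
transitivity (\sum_(y : {ffun 'I_k -> X}) \prod_j c' j (y j)).
  rewrite big_mkcond /=; apply: eq_bigr => y _.
  rewrite [RHS](bigD1 t) //= /c' eqxx; case: (y t == x0); rewrite ?mul1r ?mul0r //.
  by apply: eq_bigr => j /negbTE ->.
rewrite -(bigA_distr_bigA c'); apply: big1 => j _; rewrite /c'.
case: eqP => _; last exact: c1.
by rewrite (bigD1 x0) //= eqxx big1 ?addr0 // => x /negbTE ->.
Qed.

(* With all replicas but t frozen at y, the observable only constrains replica t
   on the sites where the frozen replicas agree with tau. *)
Lemma intensive_obs_set (R : numFieldType) (Omega : finType) (n k l : nat)
    (I : 'I_l -> {set 'I_n}) (tau : 'I_k -> 'I_l -> Omega)
    (y : {ffun 'I_k -> config Omega n}) (t : 'I_k) (x : config Omega n) :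
  intensive_obs R I tau (ffun_set y t x) =
  \prod_m spin_density [set i in I m | [forall j, (j != t) ==> (y j i == tau j m)]]
                       (tau t m) x.
Proof.
rewrite /intensive_obs /spin_density big_split /= prodr_const card_ord exprVn.
congr (_ * _); rewrite bigA_distr_big_dep big_mkcond [RHS]big_mkcond /=.
have if_natr (b c : bool) : (if b then c%:R else 0 : R) = (b && c)%:R by case: b.
apply: eq_bigr => i _; rewrite !natr_prod_bool !if_natr; congr (nat_of_bool _)%:R.
apply/andP/andP => [[/forallP I_i /forallP y_i] | [/familyP I_i /forallP x_i]].
- split; last by apply/forallP => m; have := forallP (y_i t) m; rewrite ffunE eqxx.
  apply/familyP => m; rewrite inE I_i /=; apply/forallP => j; apply/implyP => jt.
  by have := forallP (y_i j) m; rewrite ffunE (negbTE jt).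
- split; first by apply/forallP => m; have := I_i m; rewrite inE => /andP[].
  apply/forallP => j; apply/forallP => m; rewrite ffunE.
  have [-> | jt] := eqVneq j t; first exact: x_i.
  by have := I_i m; rewrite inE => /andP[_ /forallP /(_ j)]; rewrite jt.
Qed.

Lemma ler_intensive_obs_replica {R : realFieldType} {Omega : finType}
    {n k l : nat} (mu nu : {ffun config Omega n -> R})
    (gamma : {ffun (config Omega n * config Omega n)%type -> R})
    (I : 'I_l -> {set 'I_n}) (tau : 'I_k -> 'I_l -> Omega) (t : 'I_k)
    (x0 : config Omega n) (c : 'I_k -> config Omega n -> R) :
  is_coupling mu nu gamma -> (forall j x, 0 <= c j x) ->
  (forall j, \sum_x c j x = 1) ->
  `|\sum_(s : {ffun 'I_k -> config Omega n}) intensive_obs R I tau s *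
      ((mu (s t) - nu (s t)) * \prod_(j | j != t) c j (s j))|
    <= l%:R * cut_dist gamma.
Proof.
move=> gamma_coupling c_ge0 c_sum1; rewrite (sum_ffun_set t x0).
pose J (y : {ffun 'I_k -> config Omega n}) m :=
  [set i in I m | [forall j, (j != t) ==> (y j i == tau j m)]].
pose G y x : R := \prod_m spin_density (J y m) (tau t m) x.
have frozen_replicas y :
  \sum_x intensive_obs R I tau (ffun_set y t x) * ((mu (ffun_set y t x t)
      - nu (ffun_set y t x t)) * \prod_(j | j != t) c j (ffun_set y t x j))
  = \prod_(j | j != t) c j (y j) * (\sum_x mu x * G y x - \sum_x nu x * G y x).
  rewrite -sumrB mulr_sumr; apply: eq_bigr => x _.
  rewrite intensive_obs_set ffunE eqxx.
  have -> : \prod_(j | j != t) c j (ffun_set y t x j) = \prod_(j | j != t) c j (y j).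
    by apply: eq_bigr => j /negbTE jt; rewrite ffunE jt.
  by rewrite /G /J; ring.
under eq_bigr do rewrite frozen_replicas.
apply: le_trans (ler_norm_sum _ _ _) _.
have weights_sum1 := sum_prod_except1 t x0 _ c_sum1.
rewrite -[X in _ <= X]mul1r -[X in _ <= X * _]weights_sum1 mulr_suml.
apply: ler_sum => y _; rewrite normrM ger0_norm ?prodr_ge0 //.
by apply: ler_wpM2l; [exact: prodr_ge0 | exact: ler_prod_spin_density].
Qed.

Lemma expectB_telescope (R : numFieldType) (Omega : finType) (n k : nat)
    (mu nu : {ffun config Omega n -> R}) (f : ('I_k -> config Omega n) -> R) :
  expect mu f - expect nu f =
  \sum_(t < k) \sum_(s : {ffun 'I_k -> config Omega n}) f s *
    ((mu (s t) - nu (s t)) *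
     \prod_(j | j != t) (if (j < t)%N then nu (s j) else mu (s j))).
Proof.
rewrite /expect -sumrB exchange_big; apply: eq_bigr => s _.
by rewrite -mulrBr prodrB_telescope mulr_sumr.
Qed.

Lemma ler_expect_intensive_obs {R : realFieldType} {Omega : finType}
    {n k l : nat} (x0 : config Omega n) (mu nu : {ffun config Omega n -> R})
    (gamma : {ffun (config Omega n * config Omega n)%type -> R})
    (I : 'I_l -> {set 'I_n}) (tau : 'I_k -> 'I_l -> Omega) :
  is_prob mu -> is_prob nu -> is_coupling mu nu gamma ->
  `|expect mu (intensive_obs R I tau) - expect nu (intensive_obs R I tau)|
    <= (k * l)%:R * cut_dist gamma.
Proof.
move=> [mu_ge0 mu_sum1] [nu_ge0 nu_sum1] gamma_coupling.
rewrite expectB_telescope natrM -mulrA mulr_natl -[X in _ *+ X]card_ord.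
rewrite -sumr_const; apply: le_trans (ler_norm_sum _ _ _) (ler_sum _ _) => t _.
pose c (j : 'I_k) x := if (j < t)%N then nu x else mu x.
apply: (ler_intensive_obs_replica _ _ _ _ _ _ x0 c) => //.
- by move=> j x; rewrite /c; case: (j < t)%N.
- by move=> j; rewrite /c; case: (j < t)%N.
Qed.

Theorem corollary2p7 (R : archiRcfType) (Omega : finType) (HOmega : (1 < #|Omega|)%N)
    (eps : R) (Heps : 0 < eps) (k l : nat) (Hk : (1 <= k)%N) (Hl : (1 <= l)%N) :
  exists delta : R, 0 < delta /\
  exists n0 : nat, (0 < n0)%N /\
  forall n : nat, (n0 < n)%N ->
  forall mu nu : {ffun config Omega n -> R},
    is_prob mu -> is_prob nu -> Dcut_lt mu nu delta ->
  forall (I : 'I_l -> {set 'I_n}) (tau : 'I_k -> 'I_l -> Omega),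
    `| expect mu (intensive_obs R I tau) - expect nu (intensive_obs R I tau) | < eps.
Proof.
have kl_gt0 : 0 < (k * l)%:R :> R by rewrite ltr0n muln_gt0 Hk Hl.
exists (eps / (k * l)%:R); split; first by rewrite divr_gt0.
exists 1%N; split => // n _ mu nu mu_prob nu_prob [gamma [gamma_coupling cut_lt]] I tau.
have [om _] := card_gt0P (ltnW HOmega).
have := ler_expect_intensive_obs [ffun => om] _ _ _ I tau mu_prob nu_prob gamma_coupling.
move/le_lt_trans; apply.
by rewrite -ltr_pdivlMl // mulrC.
Qed.
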